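(* Let $\kappa=(\kappa_1,\dots,\kappa_n)\in\Gamma_k$ with $\kappa_1\geq\kappa_2\geq\dots\geq\kappa_n$, and let $A>0$ with $\kappa_n>-A$. Let $C_0=C(\sigma_k,n,A)$ be a constant such that $\kappa_k<C_0$ (a constant depending only on $n$, $k$, $A$ and an upper bound for $\sigma_k(\kappa)$, valid for all such $\kappa$). Let $N>\max\{1,C_0\}$. If $\kappa_1\geq N^{2^{k-1}}$, then there exists $1\leq l\leq k-1$ such that $\kappa_l\geq M^2$ and $\kappa_{l+1}\leq M$, where $M=N^{2^{k-l-1}}$.
   Context: $\sigma_m(\kappa)$ is the $m$-th elementary symmetric polynomial on $\mathbb{R}^n$, and $\Gamma_k=\{\kappa\in\mathbb{R}^n:\sigma_j(\kappa)>0\text{ for all }1\leq j\leq k\}$ is the Gårding cone. *)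

From HB Require Import structures.
From mathcomp Require Import all_boot all_order all_algebra.
Set Implicit Arguments. Unset Strict Implicit. Unset Printing Implicit Defensive.
Import Order.TTheory GRing.Theory Num.Theory.
Local Open Scope ring_scope.

Definition sigma (R : nzRingType) (n m : nat) (kappa : 'I_n -> R) : R :=
  \sum_(I : {set 'I_n} | #|I| == m) \prod_(i in I) kappa i.

Definition garding (R : numDomainType) (n k : nat) (kappa : 'I_n -> R) : Prop :=
  forall j : nat, (1 <= j <= k)%N -> 0 < sigma j kappa.

(* 1-based component kappa_i (i in 1..n); value 0 outside that range *)
Definition kcomp (R : nzRingType) (n : nat) (kappa : 'I_n -> R) (i : nat) : R :=
  match @insub nat (fun j => j < n)%N _ i.-1 with
  | Some j => kappa j
  | None => 0
  end.

Definition sorted_desc (R : numDomainType) (n : nat) (kappa : 'I_n -> R) : Prop :=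
  forall i j : 'I_n, (i <= j)%N -> kappa j <= kappa i.

(* Along the thresholds b_l = N^(2^(k-l)) one has b_1 <= kappa_1 by hypothesis,
   while kappa_k < C0 < N = b_k; so somewhere the sequence drops from above b_l
   to below b_(l+1), and b_l = b_(l+1)^2 is exactly the claimed gap with
   M = b_(l+1). *)

From HB Require Import structures.
From mathcomp Require Import all_boot all_order all_algebra.
Import Order.TTheory GRing.Theory Num.Theory.

Section DownCrossing.
Local Open Scope order_scope.

Lemma ex_down_crossing d (T : orderType d) (b f : nat -> T) (j k : nat) :
  (j <= k)%N -> b j <= f j -> f k < b k ->
  exists2 l, (j <= l < k)%N & b l <= f l /\ f l.+1 < b l.+1.
Proof.
move=> + bj; elim: k => [|k IH].
  by rewrite leqn0 => /eqP j0 fk; move: bj; rewrite j0 leNgt fk.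
rewrite leq_eqVlt ltnS => /orP[/eqP jk | j_le_k] fk.
  by move: bj; rewrite jk leNgt fk.
have [bk_le_fk | fk_lt_bk] := leP (b k) (f k).
  by exists k; first rewrite j_le_k /=.
have [l /andP[j_le_l l_lt_k] crossing] := IH j_le_k fk_lt_bk.
by exists l; first rewrite j_le_l ltnS ltnW.
Qed.

End DownCrossing.

Local Open Scope ring_scope.

Theorem proposition2p15 (R : realFieldType) (n k : nat) (A S C0 N : R)
  (kappa : 'I_n -> R) :
  (1 <= k <= n)%N ->
  0 < A ->
  (* C0 = C(sigma_k, n, A): bounds kappa_k for every admissible kappa'
     with sigma_k(kappa') <= S *)
  (forall kappa' : 'I_n -> R,
      garding k kappa' -> sorted_desc kappa' ->
      - A < kcomp kappa' n -> sigma k kappa' <= S ->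
      kcomp kappa' k < C0) ->
  garding k kappa -> sorted_desc kappa ->
  - A < kcomp kappa n -> sigma k kappa <= S ->
  Num.max 1 C0 < N ->
  N ^+ (2 ^ k.-1) <= kcomp kappa 1 ->
  exists l : nat, (1 <= l <= k.-1)%N /\
    (let M := N ^+ (2 ^ (k - l - 1)) in
     M ^+ 2 <= kcomp kappa l /\ kcomp kappa l.+1 <= M).
Proof.
move=> /andP[k_gt0 _] _ C0_bound gard sorted kappa_n sigma_k.
rewrite gt_max => /andP[_ C0_lt_N] kappa_1.
have kappa_k : kcomp kappa k < N.
  exact: lt_trans (C0_bound _ gard sorted kappa_n sigma_k) C0_lt_N.
pose b l := N ^+ (2 ^ (k - l)).
have [||l /andP[l_gt0 l_lt_k] [bl kappa_l1]] :=
  @ex_down_crossing _ _ b (kcomp kappa) 1 k k_gt0.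
- by rewrite /b subn1.
- by rewrite /b subnn expr1.
exists l; split; first by rewrite l_gt0 -ltnS prednK.
have k_l : (k - l = (k - l - 1).+1)%N by rewrite subn1 prednK ?subn_gt0.
rewrite /= -exprM -expnSr -k_l; split; first exact: bl.
by rewrite -subnDA addn1 (ltW kappa_l1).
Qed.
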